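(* Let $u,v,w$ be three pairwise non-adjacent vertices in a $\{P_5,\overline{P_5}\}$-free graph $G$, and suppose $w$ is mixed on a set $A\subseteq N(u)\cap N(v)$ with $G[A]$ anticonnected. Then no vertex $z\in N(w)\setminus(A\cup\{u,v\})$ is mixed on $\{u,v\}$.
   Context: All graphs are finite and simple. $N(x)$ is the set of neighbors of $x$. $P_5$ is the path on five vertices, $\overline{P_5}$ its complement; $G$ is $\mathcal F$-free if it has no induced subgraph isomorphic to a member of $\mathcal F$. A graph is anticonnected if its complement is connected. A vertex $b\notin X$ is mixed on $X$ if it has both a neighbor and a non-neighbor in $X$. *)

From mathcomp Require Import all_boot.
Set Implicit Arguments. Unset Strict Implicit. Unset Printing Implicit Defensive.

Definition simple_graph (T : finType) (e : rel T) : Prop :=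
  symmetric e /\ irreflexive e.

Definition has_induced (T : finType) (e : rel T) (n : nat) (H : rel 'I_n) : Prop :=
  exists f : 'I_n -> T, injective f /\ forall i j, e (f i) (f j) = H i j.

Definition P5 : rel 'I_5 := fun i j => (i.+1 == j :> nat) || (j.+1 == i :> nat).
Definition coP5 : rel 'I_5 := fun i j => (i != j) && ~~ P5 i j.

Definition P5_coP5_free (T : finType) (e : rel T) : Prop :=
  ~ has_induced e P5 /\ ~ has_induced e coP5.

(* b is mixed on X : b has a neighbour and a non-neighbour in X (b \notin X
   is imposed separately where needed). *)
Definition mixed (T : finType) (e : rel T) (b : T) (X : {set T}) : Prop :=
  (exists2 x, x \in X & e b x) /\ (exists2 y, y \in X & ~~ e b y).

(* G[A] is anticonnected: its complement is connected, i.e. any two vertices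
   of A are joined by a path of non-edges of G staying inside A. *)
Definition anticonnected (T : finType) (e : rel T) (A : {set T}) : Prop :=
  forall x y, x \in A -> y \in A ->
    connect (fun a b => [&& a \in A, b \in A, a != b & ~~ e a b]) x y.

From mathcomp Require Import all_boot.
Set Implicit Arguments. Unset Strict Implicit.

(* Let a, b be adjacent to both u and v with a, b non-adjacent, w ~ a and
   w !~ b.  If a neighbour z of w were mixed on {u, v}, say z ~ u and
   z !~ v, then according to the adjacency of z to a and b one of the
   sequences
     z v w b a,  u v z b a,  u v z a b   induces the complement of P5,
     v b u z w                          induces P5,
   contradicting {P5, co-P5}-freeness.  The pair (a, b) exists because w is
   mixed on the anticonnected set A: walking from a neighbour to a
   non-neighbour of w along non-edges inside A, some step goes from a
   neighbour of w to a non-neighbour. *)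

(* A map f : 'I_n -> T whose adjacencies reproduce H exactly is an induced
   copy of H as soon as distinct vertices of H have distinct neighbourhoods:
   injectivity of f is then forced. *)
Lemma induced_of_rows (T : finType) (e : rel T) (n : nat) (H : rel 'I_n)
    (f : 'I_n -> T) :
  (forall i j, i != j -> exists k, H i k != H j k) ->
  (forall i j, e (f i) (f j) = H i j) -> has_induced e H.
Proof.
move=> rows_distinct f_adj; exists f; split=> // i j fij.
apply/eqP; apply/negP => /negP /rows_distinct [k].
by rewrite -!f_adj fij eqxx.
Qed.

Lemma P5_sym : symmetric P5.
Proof. by move=> i j; rewrite /P5 orbC. Qed.

Lemma P5_irr : irreflexive P5.
Proof. by move=> i; rewrite /P5 gtn_eqF. Qed.

Lemma P5_rows_distinct (i j : 'I_5) : i != j -> exists k, P5 i k != P5 j k.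
Proof.
case: i j => [[|[|[|[|[|i]]]]] ?] // [[|[|[|[|[|j]]]]] ?] // _;
  by [exists ord0 | exists (@Ordinal 5 1 isT) | exists (@Ordinal 5 2 isT)
     | exists (@Ordinal 5 3 isT) | exists (@Ordinal 5 4 isT)].
Qed.

Lemma coP5_sym : symmetric coP5.
Proof. by move=> i j; rewrite /coP5 eq_sym P5_sym. Qed.

Lemma coP5_irr : irreflexive coP5.
Proof. by move=> i; rewrite /coP5 eqxx. Qed.

Lemma coP5_rows_distinct (i j : 'I_5) :
  i != j -> exists k, coP5 i k != coP5 j k.
Proof.
case: i j => [[|[|[|[|[|i]]]]] ?] // [[|[|[|[|[|j]]]]] ?] // _;
  by [exists ord0 | exists (@Ordinal 5 1 isT) | exists (@Ordinal 5 2 isT)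
     | exists (@Ordinal 5 3 isT) | exists (@Ordinal 5 4 isT)].
Qed.

Section InducedPatterns.
Variables (T : finType) (e : rel T).
Hypothesis sg : simple_graph e.

Lemma adjacency_of_upper (n : nat) (H : rel 'I_n) (f : 'I_n -> T) :
  symmetric H -> irreflexive H ->
  (forall i j : 'I_n, i < j -> e (f i) (f j) = H i j) ->
  forall i j, e (f i) (f j) = H i j.
Proof.
have [e_sym e_irr] := sg.
move=> H_sym H_irr upper i j; case: (ltngtP i j) => [lt_ij|lt_ji|eq_ij].
- exact: upper.
- by rewrite e_sym H_sym upper.
- by rewrite (val_inj eq_ij) e_irr H_irr.
Qed.

Lemma induced5 (H : rel 'I_5) (x0 x1 x2 x3 x4 : T) :
  symmetric H -> irreflexive H ->
  (forall i j, i != j -> exists k, H i k != H j k) ->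
  (forall i j : 'I_5, i < j ->
     e (nth x0 [:: x0; x1; x2; x3; x4] i) (nth x0 [:: x0; x1; x2; x3; x4] j)
     = H i j) ->
  has_induced e H.
Proof.
move=> H_sym H_irr rows upper.
exact: induced_of_rows rows (adjacency_of_upper H_sym H_irr upper).
Qed.

Lemma induced_P5 (x0 x1 x2 x3 x4 : T) :
  e x0 x1 -> e x1 x2 -> e x2 x3 -> e x3 x4 ->
  ~~ e x0 x2 -> ~~ e x0 x3 -> ~~ e x0 x4 -> ~~ e x1 x3 -> ~~ e x1 x4 ->
  ~~ e x2 x4 ->
  has_induced e P5.
Proof.
move=> e01 e12 e23 e34 /negbTE e02 /negbTE e03 /negbTE e04 /negbTE e13
  /negbTE e14 /negbTE e24.
apply: (@induced5 P5 x0 x1 x2 x3 x4 P5_sym P5_irr P5_rows_distinct).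
by move=> [[|[|[|[|[|i]]]]] ?] // [[|[|[|[|[|j]]]]] ?].
Qed.

Lemma induced_coP5 (x0 x1 x2 x3 x4 : T) :
  ~~ e x0 x1 -> ~~ e x1 x2 -> ~~ e x2 x3 -> ~~ e x3 x4 ->
  e x0 x2 -> e x0 x3 -> e x0 x4 -> e x1 x3 -> e x1 x4 -> e x2 x4 ->
  has_induced e coP5.
Proof.
move=> /negbTE e01 /negbTE e12 /negbTE e23 /negbTE e34 e02 e03 e04 e13 e14
  e24.
apply: (@induced5 coP5 x0 x1 x2 x3 x4 coP5_sym coP5_irr coP5_rows_distinct).
by move=> [[|[|[|[|[|i]]]]] ?] // [[|[|[|[|[|j]]]]] ?].
Qed.

End InducedPatterns.

Lemma mixed_anticonnected_antiedge (T : finType) (e : rel T) (w : T)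
    (A : {set T}) :
  anticonnected e A -> mixed e w A ->
  exists a b, [/\ a \in A, b \in A, ~~ e a b, e w a & ~~ e w b].
Proof.
move=> antiA [[x xA wx] [y yA wy]].
have /connectP [p p_path p_last] := antiA x y xA yA.
rewrite {}p_last {y yA} in wy.
elim: p x xA wx p_path wy => [|c p IHp] x xA wx /=; first by rewrite wx.
case/andP => /and4P [_ cA _ xc] p_path wy.
have [wc|wc] := boolP (e w c); first exact: IHp wc p_path wy.
by exists x, c.
Qed.

Lemma mixed_pair (T : finType) (e : rel T) (z u v : T) :
  mixed e z [set u; v] -> (e z u && ~~ e z v) || (e z v && ~~ e z u).
Proof.
case=> [[x xuv zx] [y yuv zy]]; move: xuv yuv zx zy; rewrite !inE.
by case/orP=> /eqP-> /orP[] /eqP->; case: (e z u); case: (e z v).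
Qed.

Lemma no_one_sided_neighbour (T : finType) (e : rel T) (u v w a b z : T) :
  simple_graph e -> P5_coP5_free e ->
  ~~ e u v -> ~~ e u w -> ~~ e v w ->
  e u a -> e v a -> e u b -> e v b -> ~~ e a b -> e w a -> ~~ e w b ->
  e w z -> e z u -> ~~ e z v -> False.
Proof.
move=> sg [noP5 nocoP5] uv uw vw ua va ub vb ab wa wb wz zu zv.
have [e_sym _] := sg.
have [za|za] := boolP (e z a); have [zb|zb] := boolP (e z b).
- apply: nocoP5; apply: (induced_coP5 sg (x0 := z) (x1 := v) (x2 := w)
    (x3 := b) (x4 := a)); by rewrite // e_sym.
- apply: nocoP5; apply: (induced_coP5 sg (x0 := u) (x1 := v) (x2 := z)
    (x3 := b) (x4 := a)); by rewrite // e_sym.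
- apply: nocoP5; apply: (induced_coP5 sg (x0 := u) (x1 := v) (x2 := z)
    (x3 := a) (x4 := b)); by rewrite // e_sym.
- apply: noP5; apply: (induced_P5 sg (x0 := v) (x1 := b) (x2 := u)
    (x3 := z) (x4 := w)); by rewrite // e_sym.
Qed.

Theorem lemma2p6 (T : finType) (e : rel T) (u v w : T) (A : {set T}) :
  simple_graph e -> P5_coP5_free e ->
  u != v -> u != w -> v != w ->
  ~~ e u v -> ~~ e u w -> ~~ e v w ->
  A \subset [set x | e u x & e v x] ->
  anticonnected e A ->
  w \notin A -> mixed e w A ->
  forall z, e w z -> z \notin A -> z != u -> z != v ->
    ~ mixed e z [set u; v].
Proof.
move=> sg free _ _ _ uv uw vw /subsetP A_common antiA _ mixA z wz _ _ _ mixz.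
have [a [b [aA bA ab wa wb]]] := mixed_anticonnected_antiedge antiA mixA.
have /A_common := aA; rewrite inE => /andP [ua va].
have /A_common := bA; rewrite inE => /andP [ub vb].
have [e_sym _] := sg.
have vu : ~~ e v u by rewrite e_sym.
case/orP: (mixed_pair mixz) => /andP [zx zy].
- exact: (no_one_sided_neighbour sg free uv uw vw ua va ub vb ab wa wb wz zx zy).
- exact: (no_one_sided_neighbour sg free vu vw uw va ua vb ub ab wa wb wz zx zy).
Qed.
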